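(* Let $x_1,\dots,x_N \in [-1,1]^d$ with labels $y_1,\dots,y_N \in \{-1,1\}$, let $\lambda > 0$, and let $F(\beta) = \frac{1}{N}\sum_{i=1}^N \max(0, 1 - y_i \beta\cdot x_i) + \lambda\|\beta\|_2^2$, with $\beta^* = \arg\min_{\beta\in\mathbb{R}^d} F(\beta)$. Let $\mathcal K$ be the ball of radius $\frac{\sqrt d}{2\lambda}$ centered at the origin. Starting from $\beta^{(0)} = 0$, perform projected gradient descent $\beta^{(t)} = \Pi_{\mathcal K}(\beta^{(t-1)} - \eta_t \nabla F(\beta^{(t-1)}))$ with $\eta_t = \frac{1}{8\lambda\sqrt{dt}}$, and let $\widehat\beta_s = \frac{1}{s}\sum_{t=0}^{s-1}\beta^{(t)}$. Then after $T-1$ iterations, $$F(\widehat\beta_T) - F(\beta^* ) \le \frac{4 d^{3/2}}{\lambda\sqrt T}.$$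
   Context: $\Pi_{\mathcal K}(\alpha) = \arg\min_{\beta\in\mathcal K}\|\alpha-\beta\|_2$. The gradient used is $\nabla F(\beta) = 2\lambda\beta - \frac{1}{N}\sum_{i:\ y_i\beta\cdot x_i \le 1} y_i x_i$ (the subgradient that counts points lying exactly on the hinge). *)

From HB Require Import structures.
From mathcomp Require Import all_boot all_order all_algebra.
From mathcomp Require Import reals.
Set Implicit Arguments. Unset Strict Implicit. Unset Printing Implicit Defensive.
Import Order.TTheory GRing.Theory Num.Theory.
Local Open Scope ring_scope.

Section SVM.
Variables (R : realType) (d N : nat).

Definition dotp (u v : 'rV[R]_d) : R := \sum_(j < d) u 0 j * v 0 j.
Definition norm2 (u : 'rV[R]_d) : R := Num.sqrt (dotp u u).

Variables (x : 'I_N -> 'rV[R]_d) (y : 'I_N -> R) (lam : R).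

Definition svmF (b : 'rV[R]_d) : R :=
  N%:R^-1 * (\sum_(i < N) Num.max 0 (1 - y i * dotp b (x i)))
  + lam * (norm2 b) ^+ 2.

Definition svm_grad (b : 'rV[R]_d) : 'rV[R]_d :=
  (2 * lam) *: b - N%:R^-1 *: (\sum_(i < N | y i * dotp b (x i) <= 1) (y i *: x i)).

Definition svm_eta (t : nat) : R := (8 * lam * Num.sqrt (d%:R * t%:R))^-1.

Fixpoint pgd_iter (proj : 'rV[R]_d -> 'rV[R]_d) (t : nat) : 'rV[R]_d :=
  match t with
  | 0 => 0
  | t'.+1 => let b := pgd_iter proj t' in
             proj (b - svm_eta t'.+1 *: svm_grad b)
  end.

Definition pgd_avg (proj : 'rV[R]_d -> 'rV[R]_d) (s : nat) : 'rV[R]_d :=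
  s%:R^-1 *: \sum_(t < s) pgd_iter proj t.

End SVM.

Definition in_ball (R : realType) (d : nat) (r : R) (b : 'rV[R]_d) : Prop :=
  norm2 b <= r.

Definition is_ball_projection (R : realType) (d : nat) (r : R)
  (proj : 'rV[R]_d -> 'rV[R]_d) : Prop :=
  forall a, in_ball r (proj a) /\
    (forall b, in_ball r b -> norm2 (a - proj a) <= norm2 (a - b)).

From HB Require Import structures.
From mathcomp Require Import all_boot all_order all_algebra.
From mathcomp Require Import reals.
From mathcomp Require Import ring lra.
Set Implicit Arguments. Unset Strict Implicit. Unset Printing Implicit Defensive.
Import Order.TTheory GRing.Theory Num.Theory.
Local Open Scope ring_scope.

(* With the hinge subgradient used by the algorithm, F is strongly convex:
   F b >= F c + <grad F c, b - c> + lam |b - c|^2.  On the ball K the subgradient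
   has squared norm at most 4 d, the minimizer lies in K (shrinking a longer vector
   towards 0 decreases F), and the projection onto K is nonexpansive.  So one step
   gives, with D_t = |beta_t - beta*|^2 and c_t = 1 / (2 eta_t) = 4 lam sqrt (d t),
     F beta_t - F beta* <= c_(t+1) (D_t - D_(t+1)) - lam D_t + 2 d eta_(t+1).
   As D_t is at most the squared diameter d / lam^2 of K, an induction on the
   potential sum_(t<n) (F beta_t - F beta* ) + c_n D_n bounds the regret by
   c_T d / lam^2 = 4 d^(3/2) sqrt T / lam, and Jensen's inequality transfers this
   bound to the averaged iterate. *)

Section InnerProduct.
Variables (R : realType) (d : nat).
Implicit Types (u v w : 'rV[R]_d).

Lemma dotpC u v : dotp u v = dotp v u.
Proof. by apply: eq_bigr => j _; rewrite mulrC. Qed.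

Lemma dotpDl u v w : dotp (u + v) w = dotp u w + dotp v w.
Proof. by rewrite /dotp -big_split; apply: eq_bigr => j _; rewrite mxE mulrDl. Qed.

Lemma dotpZl k u w : dotp (k *: u) w = k * dotp u w.
Proof. by rewrite /dotp mulr_sumr; apply: eq_bigr => j _; rewrite mxE mulrA. Qed.

Lemma dotpNl u w : dotp (- u) w = - dotp u w.
Proof. by rewrite -scaleN1r dotpZl mulN1r. Qed.

Lemma dotpBl u v w : dotp (u - v) w = dotp u w - dotp v w.
Proof. by rewrite dotpDl dotpNl. Qed.

Lemma dotp0l w : dotp 0 w = 0.
Proof. by rewrite -(scale0r 0) dotpZl mul0r. Qed.

Lemma dotpDr u v w : dotp w (u + v) = dotp w u + dotp w v.
Proof. by rewrite dotpC dotpDl !(dotpC w). Qed.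

Lemma dotpZr k u w : dotp w (k *: u) = k * dotp w u.
Proof. by rewrite dotpC dotpZl dotpC. Qed.

Lemma dotpNr u w : dotp w (- u) = - dotp w u.
Proof. by rewrite dotpC dotpNl dotpC. Qed.

Lemma dotpBr u v w : dotp w (u - v) = dotp w u - dotp w v.
Proof. by rewrite dotpDr dotpNr. Qed.

Lemma dotp0r w : dotp w 0 = 0.
Proof. by rewrite dotpC dotp0l. Qed.

Lemma dotp_suml (I : finType) (P : pred I) (F : I -> 'rV[R]_d) w :
  dotp (\sum_(i | P i) F i) w = \sum_(i | P i) dotp (F i) w.
Proof. exact: (big_morph (fun u => dotp u w) (fun u v => dotpDl u v w) (dotp0l w)). Qed.

Lemma dotp_sumr (I : finType) (F : I -> 'rV[R]_d) w :
  dotp w (\sum_i F i) = \sum_i dotp w (F i).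
Proof. by rewrite dotpC dotp_suml; apply: eq_bigr => i _; rewrite dotpC. Qed.

Lemma dotp_ge0 u : 0 <= dotp u u.
Proof. by apply: sumr_ge0 => j _; rewrite -expr2 sqr_ge0. Qed.

Lemma dotp_eq0l u v : dotp u u = 0 -> dotp u v = 0.
Proof.
move=> /eqP; rewrite psumr_eq0 => [/allP u0|j _]; last by rewrite -expr2 sqr_ge0.
apply: big1 => j _; have /implyP := u0 j (mem_index_enum _).
by rewrite -expr2 sqrf_eq0 => /(_ isT) /eqP ->; rewrite mul0r.
Qed.

Lemma norm2_sq u : norm2 u ^+ 2 = dotp u u.
Proof. by rewrite sqr_sqrtr ?dotp_ge0. Qed.

Lemma dotp_sub_le u v : dotp (u - v) (u - v) <= 2 * dotp u u + 2 * dotp v v.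
Proof.
have := dotp_ge0 (u + v).
rewrite !(dotpBl, dotpBr, dotpDl, dotpDr) (dotpC v u); lra.
Qed.

Lemma cauchy_schwarz u v : dotp u v <= norm2 u * norm2 v.
Proof.
set a := norm2 u; set b := norm2 v.
have [a_ge0 b_ge0] : 0 <= a /\ 0 <= b by split; apply: sqrtr_ge0.
have [au bv] : a ^+ 2 = dotp u u /\ b ^+ 2 = dotp v v by split; apply: norm2_sq.
have [/eqP|ab_neq0] := eqVneq (a * b) 0.
  rewrite mulf_eq0 => /orP[] /eqP ab0.
    by rewrite dotp_eq0l ?ab0 ?mul0r // -au ab0 expr0n.
  by rewrite dotpC dotp_eq0l ?ab0 ?mulr0 // -bv ab0 expr0n.
have ab_gt0 : 0 < a * b by rewrite lt_def ab_neq0 mulr_ge0.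
(* expanding [0 <= |b u - a v|^2] gives [0 <= 2 a b (a b - <u, v>)] *)
have := dotp_ge0 (b *: u - a *: v).
rewrite !(dotpBl, dotpBr, dotpZl, dotpZr) -au -bv (dotpC v u) => h.
by rewrite -subr_ge0 -(pmulr_rge0 _ ab_gt0); nra.
Qed.

Lemma dotp_le_dim v : (forall j, `|v 0 j| <= 1) -> dotp v v <= d%:R.
Proof.
move=> v1; rewrite /dotp -[d in d%:R]card_ord -sumr_const; apply: ler_sum => j _.
by apply: le_trans (ler_norm _) _; rewrite normrM mulr_ile1.
Qed.

Lemma abs_dotp_le_sqrt u v : (forall j, `|v 0 j| <= 1) ->
  `|dotp u v| <= norm2 u * Num.sqrt d%:R.
Proof.
move=> /dotp_le_dim vv.
have nv : norm2 (- v) = norm2 v by rewrite /norm2 dotpNl dotpNr opprK.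
have le_sqrt w : norm2 w <= norm2 v -> dotp u w <= norm2 u * Num.sqrt d%:R.
  move=> wv; apply: (le_trans (cauchy_schwarz u w)); apply: ler_wpM2l.
    exact: sqrtr_ge0.
  by apply: (le_trans wv); rewrite ler_sqrt.
by rewrite ler_norml le_sqrt // lerNl -dotpNr le_sqrt ?nv.
Qed.

End InnerProduct.

Lemma le0_of_forall_le_scale (R : realFieldType) (a b : R) : 0 <= b ->
  (forall e, 0 < e <= 1 -> a <= e * b) -> a <= 0.
Proof.
move=> b_ge0 small; rewrite leNgt; apply/negP => a_gt0.
have ab_gt0 : 0 < a + b by lra.
have /small : 0 < a / (a + b) <= 1 by rewrite divr_gt0 // ler_pdivrMr // mul1r; lra.
rewrite mulrAC ler_pdivlMr //; nra.
Qed.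

Section BallProjection.
Variables (R : realType) (d : nat) (r : R) (proj : 'rV[R]_d -> 'rV[R]_d).
Hypotheses (r_ge0 : 0 <= r) (projP : is_ball_projection r proj).

Lemma in_ball_sq (b : 'rV[R]_d) : in_ball r b <-> dotp b b <= r ^+ 2.
Proof.
have nb : 0 <= norm2 b := sqrtr_ge0 _.
rewrite /in_ball -norm2_sq; split => h.
  by rewrite ler_pXn2r ?nnegrE.
by rewrite -(ler_pXn2r (_ : 0 < 2)%N) ?nnegrE.
Qed.

Lemma in_ball_convex (p z : 'rV[R]_d) (e : R) : 0 <= e <= 1 ->
  in_ball r p -> in_ball r z -> in_ball r ((1 - e) *: p + e *: z).
Proof.
move=> /andP[e_ge0 e_le1] /in_ball_sq pp /in_ball_sq zz; apply/in_ball_sq.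
(* |(1-e)p + ez|^2 = (1-e)|p|^2 + e|z|^2 - e(1-e)|p-z|^2 *)
have := dotp_ge0 (p - z).
rewrite !(dotpBl, dotpBr, dotpDl, dotpDr, dotpZl, dotpZr) (dotpC z p) => pz.
have : 0 <= e * (1 - e) by rewrite mulr_ge0 ?subr_ge0.
nra.
Qed.

Lemma ball_projection_obtuse (a z : 'rV[R]_d) : in_ball r z ->
  dotp (a - proj a) (z - proj a) <= 0.
Proof.
move=> zK; have [pK pmin] := projP a.
set p := proj a in pK pmin *; set u := a - p; set v := z - p.
rewrite -(pmulr_rle0 _ (ltr0Sn _ 1)).
apply: (le0_of_forall_le_scale (dotp_ge0 v)) => e /andP[e_gt0 e_le1].
have wK : in_ball r (p + e *: v).
  have -> : p + e *: v = (1 - e) *: p + e *: z.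
    by rewrite /v scalerBr scalerBl scale1r addrA addrAC.
  by apply: in_ball_convex => //; rewrite ltW.
have := pmin _ wK; rewrite /norm2 ler_sqrt ?dotp_ge0 //.
rewrite (_ : a - (p + e *: v) = u - e *: v); last by rewrite opprD addrA.
rewrite -/u; clearbody u v; rewrite !(dotpBl, dotpBr, dotpZl, dotpZr) (dotpC v u) => uv.
by rewrite -(ler_pM2l e_gt0); nra.
Qed.

Lemma ball_projection_nonexpansive (a z : 'rV[R]_d) : in_ball r z ->
  dotp (proj a - z) (proj a - z) <= dotp (a - z) (a - z).
Proof.
move=> /(ball_projection_obtuse a); set p := proj a => obtuse.
have -> : a - z = (a - p) + (p - z) by rewrite addrA subrK.
have := dotp_ge0 (a - p); move: obtuse; rewrite -(opprB p z).
move: (a - p) (p - z) => u w; rewrite dotpNr !(dotpDl, dotpDr) (dotpC w u); lra.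
Qed.

Lemma proj_subgrad_step (eta mu : R) (b z g : 'rV[R]_d) (Fb Fz : R) :
  in_ball r z -> 0 < eta ->
  Fb + dotp g (z - b) + mu * dotp (z - b) (z - b) <= Fz ->
  Fb - Fz <= (2 * eta)^-1 * (dotp (b - z) (b - z)
                              - dotp (proj (b - eta *: g) - z) (proj (b - eta *: g) - z))
             - mu * dotp (b - z) (b - z) + eta / 2 * dotp g g.
Proof.
move=> zK eta_gt0; rewrite -(opprB b z).
have := ball_projection_nonexpansive (b - eta *: g) zK.
rewrite [b - _ - z]addrAC; move: (b - z) (proj _ - z) => w w'.
rewrite !(dotpBl, dotpBr, dotpZl, dotpZr, dotpNl, dotpNr) opprK (dotpC g w).
set D := dotp w w; set D' := dotp w' w' => descent subgrad.
have -> : (2 * eta)^-1 * (D - D') = dotp w g - eta / 2 * dotp g g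
    + (2 * eta)^-1 * (D - D' - (2 * eta * dotp w g - eta ^+ 2 * dotp g g)).
  by field; rewrite gt_eqF.
have : 0 <= (2 * eta)^-1 * (D - D' - (2 * eta * dotp w g - eta ^+ 2 * dotp g g)).
  by apply: mulr_ge0; [rewrite invr_ge0 mulr_ge0 // ltW | rewrite expr2; lra].
lra.
Qed.

End BallProjection.

Lemma sum_add_potential_le (R : realDomainType) (e D c q : nat -> R) (K mu : R) :
  (forall t, e t <= c t.+1 * (D t - D t.+1) - mu * D t + q t.+1) ->
  (forall t, 0 <= D t <= K) -> 0 <= c 0%N ->
  (forall t, q t.+1 <= K * mu) -> (forall t, q t.+1 <= K * (c t.+1 - c t)) ->
  forall n, \sum_(t < n) e t + c n * D n <= K * c n.
Proof.
move=> step D_bnd c0_ge0 q_mu q_c; elim=> [|n IHn].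
  by rewrite big_ord0 add0r mulrC; apply: ler_wpM2r => //; case/andP: (D_bnd 0%N).
rewrite big_ord_recr /=; have /andP[Dn_ge0 Dn_leK] := D_bnd n.
have := step n; have := q_mu n; have := q_c n.
(* the coefficient [c (n+1) - c n - mu] of [D n] is either <= 0, or is paid for by [D n <= K] *)
have [coef_le0|coef_gt0] := lerP (c n.+1 - c n - mu) 0.
  have : D n * (c n.+1 - c n - mu) <= 0 by rewrite mulr_ge0_le0.
  nra.
have : D n * (c n.+1 - c n - mu) <= K * (c n.+1 - c n - mu).
  by rewrite ler_wpM2r // ltW.
nra.
Qed.

Lemma hinge_subgrad (R : realDomainType) (m k : R) :
  Num.max 0 (1 - m) - (if m <= 1 then k else 0) <= Num.max 0 (1 - (m + k)).
Proof.
case: ifP => m_le1.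
  by rewrite (max_idPr _) ?subr_ge0 // le_max; apply/orP; right; lra.
by rewrite subr0 (max_idPl _) ?le_max ?lexx // subr_le0 ltW // ltNge m_le1.
Qed.

Lemma max0_addr_le (R : realDomainType) (a b : R) :
  Num.max 0 (a + b) <= Num.max 0 a + `|b|.
Proof.
have [a_le b_le] : a <= Num.max 0 a /\ b <= `|b| by rewrite le_max lexx orbT ler_norm.
by rewrite ge_max addr_ge0 ?le_max ?lexx //=; lra.
Qed.

(* also at [t = 0], where both sides vanish because [0^-1 = 0] *)
Lemma svm_eta_inv (R : realType) (d : nat) (lam : R) t :
  (2 * svm_eta d lam t)^-1 = 4 * lam * Num.sqrt (d%:R * t%:R).
Proof. by rewrite /svm_eta invfM invrK; field. Qed.

Section SVMObjective.
Variables (R : realType) (d N : nat) (x : 'I_N -> 'rV[R]_d) (y : 'I_N -> R) (lam : R).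
Local Notation F := (svmF x y lam).
Local Notation grad := (svm_grad x y lam).

Lemma svmF_subgrad (b c : 'rV[R]_d) :
  F c + dotp (grad c) (b - c) + lam * dotp (b - c) (b - c) <= F b.
Proof.
have -> : F b = F ((b - c) + c) by rewrite subrK.
move: (b - c) => e.
rewrite /svmF /svm_grad !norm2_sq !(dotpBl, dotpZl, dotp_suml, dotpDl, dotpDr) (dotpC e c).
suff hinge : \sum_(i < N) Num.max 0 (1 - y i * dotp c (x i))
    - \sum_(i < N | y i * dotp c (x i) <= 1) dotp (y i *: x i) e
    <= \sum_(i < N) Num.max 0 (1 - y i * dotp (e + c) (x i)).
  have N_ge0 : 0 <= N%:R^-1 :> R by rewrite invr_ge0.
  have := ler_wpM2l N_ge0 hinge; lra.
rewrite [X in _ - X]big_mkcond -sumrB; apply: ler_sum => i _.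
by rewrite dotpZl dotpDl (dotpC _ e) mulrDr (addrC (y i * dotp e _)); apply: hinge_subgrad.
Qed.

Lemma svmF_avg_le (T : nat) (B : nat -> 'rV[R]_d) : 0 <= lam -> (0 < T)%N ->
  T%:R * F (T%:R^-1 *: \sum_(t < T) B t) <= \sum_(t < T) F (B t).
Proof.
move=> lam_ge0 T_gt0; set a := _ *: _.
have tangent (t : 'I_T) : F a + dotp (grad a) (B t - a) <= F (B t).
  apply: le_trans (svmF_subgrad (B t) a).
  by rewrite lerDl mulr_ge0 // dotp_ge0.
have := @ler_sum _ _ (index_enum 'I_T) xpredT _ _ (fun t _ => tangent t).
rewrite big_split /= -dotp_sumr sumrB !sumr_const card_ord.
have -> : \sum_(t < T) B t - a *+ T = 0.
  by rewrite /a -scaler_nat scalerA mulfV ?pnatr_eq0 -?lt0n // scale1r subrr.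
by rewrite dotp0r addr0 mulr_natl.
Qed.

End SVMObjective.

Section SVMBounds.
Variables (R : realType) (d N : nat) (x : 'I_N -> 'rV[R]_d) (y : 'I_N -> R) (lam : R).
Hypotheses (N_gt0 : (0 < N)%N) (x_le1 : forall i j, `|x i 0 j| <= 1)
  (y_le1 : forall i, `|y i| <= 1) (lam_gt0 : 0 < lam).
Local Notation F := (svmF x y lam).
Local Notation grad := (svm_grad x y lam).
Local Notation r := (Num.sqrt d%:R / (2 * lam)).

Let r_ge0 : 0 <= r.
Proof. by rewrite divr_ge0 ?sqrtr_ge0 // ltW // mulr_gt0. Qed.

Lemma svm_grad_sq_le b : in_ball r b -> dotp (grad b) (grad b) <= 4 * d%:R.
Proof.
move=> /(in_ball_sq r_ge0); rewrite expr_div_n sqr_sqrtr ?ler0n // => bK.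
apply: le_trans (dotp_sub_le _ _) _.
have reg : dotp ((2 * lam) *: b) ((2 * lam) *: b) <= d%:R.
  by rewrite dotpZl dotpZr mulrA -expr2 mulrC -ler_pdivlMr ?exprn_gt0 ?mulr_gt0.
have loss : dotp (N%:R^-1 *: \sum_(i < N | y i * dotp b (x i) <= 1) y i *: x i)
    (N%:R^-1 *: \sum_(i < N | y i * dotp b (x i) <= 1) y i *: x i) <= d%:R.
  apply: dotp_le_dim => j; rewrite mxE summxE normrM gtr0_norm ?invr_gt0 ?ltr0n //.
  rewrite ler_pdivrMl ?ltr0n // mulr1 -[N in N%:R]card_ord -sumr_const.
  apply: le_trans (ler_norm_sum _ _ _) _; rewrite big_mkcond /=.
  apply: ler_sum => i _; case: ifP => // _.
  by rewrite mxE normrM mulr_ile1.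
lra.
Qed.

Lemma svmF_shrink_le b (e : R) : 0 <= e ->
  F ((1 - e) *: b) <=
  F b + e * (norm2 b * Num.sqrt d%:R) - lam * (1 - (1 - e) ^+ 2) * norm2 b ^+ 2.
Proof.
move=> e_ge0; rewrite /svmF !norm2_sq dotpZl dotpZr.
set c := e * _.
suff hinge : \sum_(i < N) Num.max 0 (1 - y i * dotp ((1 - e) *: b) (x i))
    <= \sum_(i < N) Num.max 0 (1 - y i * dotp b (x i)) + N%:R * c.
  have N_ge0 : 0 <= N%:R^-1 :> R by rewrite invr_ge0.
  move: (ler_wpM2l N_ge0 hinge).
  by rewrite mulrDr mulKf ?pnatr_eq0 -?lt0n //; lra.
rewrite mulr_natl -[N in c *+ N]card_ord -sumr_const -big_split; apply: ler_sum => i _.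
set m := y i * dotp b (x i).
rewrite dotpZl (_ : 1 - _ = (1 - m) + e * m); last by rewrite /m; ring.
apply: le_trans (max0_addr_le _ _) _; rewrite lerD2l normrM ger0_norm //.
apply: ler_wpM2l => //; rewrite /m normrM -[X in _ <= X]mul1r.
by rewrite ler_pM ?normr_ge0 ?abs_dotp_le_sqrt.
Qed.

Lemma svm_minimizer_in_ball bs : (forall b, F bs <= F b) -> in_ball r bs.
Proof.
move=> bs_min; rewrite /in_ball; set n := norm2 bs.
rewrite ler_pdivlMr ?mulr_gt0 //.
have : 0 <= n := sqrtr_ge0 _; rewrite le_eqVlt => /orP[/eqP <-|n_gt0].
  by rewrite mul0r sqrtr_ge0.
(* compare with the shrunk vectors [(1 - e) bs] for small [e > 0] *)
rewrite -subr_le0; apply: (le0_of_forall_le_scale (b := lam * n)).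
  by rewrite mulr_ge0 ?ltW.
move=> e /andP[e_gt0 _].
have := le_trans (bs_min _) (svmF_shrink_le bs (ltW e_gt0)); rewrite -/n => shrink.
by rewrite -(ler_pM2l (mulr_gt0 e_gt0 n_gt0)); lra.
Qed.

Section ProjectedGradientDescent.
Variables (proj : 'rV[R]_d -> 'rV[R]_d) (bstar : 'rV[R]_d).
Hypotheses (projP : is_ball_projection r proj) (bstar_min : forall b, F bstar <= F b).
Local Notation beta := (pgd_iter x y lam proj).
Local Notation D t := (dotp (beta t - bstar) (beta t - bstar)).
Local Notation c t := (4 * lam * Num.sqrt (d%:R * t%:R)).
(* [c t = (2 eta_t)^-1] by [svm_eta_inv]; [q t = eta_t / 2 * 4 d] bounds the gradient term *)
Local Notation q t := (2 * d%:R * svm_eta d lam t).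

Lemma pgd_iter_in_ball t : in_ball r (beta t).
Proof.
case: t => [|t]; last by case: (projP (beta t - svm_eta d lam t.+1 *: grad (beta t))).
by rewrite /in_ball /norm2 dotp0l sqrtr0.
Qed.

Lemma pgd_dist_sq_le t : 0 <= D t <= d%:R / lam ^+ 2.
Proof.
rewrite dotp_ge0 /=; apply: le_trans (dotp_sub_le _ _) _.
have /(in_ball_sq r_ge0) := pgd_iter_in_ball t.
have /(in_ball_sq r_ge0) := svm_minimizer_in_ball bstar_min.
rewrite expr_div_n sqr_sqrtr ?ler0n // => bstarK betaK.
have -> : d%:R / lam ^+ 2 = 4 * (d%:R / (2 * lam) ^+ 2) by field; rewrite gt_eqF.
lra.
Qed.

Hypothesis d_gt0 : (0 < d)%N.

Lemma svm_eta_gt0 t : 0 < svm_eta d lam t.+1.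
Proof. by rewrite invr_gt0 !mulr_gt0 // sqrtr_gt0 mulr_gt0 ?ltr0n. Qed.

Lemma pgd_descent t :
  F (beta t) - F bstar <= c t.+1 * (D t - D t.+1) - lam * D t + q t.+1.
Proof.
have := proj_subgrad_step r_ge0 projP (svm_minimizer_in_ball bstar_min)
  (svm_eta_gt0 t) (svmF_subgrad x y lam bstar (beta t)).
rewrite svm_eta_inv => /le_trans; apply; apply: lerD; first exact: lexx.
have := svm_grad_sq_le (pgd_iter_in_ball t).
have := svm_eta_gt0 t; nra.
Qed.

Lemma svm_eta_step_le t :
  q t.+1 <= d%:R / lam ^+ 2 * lam /\ q t.+1 <= d%:R / lam ^+ 2 * (c t.+1 - c t).
Proof.
set S := Num.sqrt (d%:R * t%:R); set S' := Num.sqrt (d%:R * t.+1%:R).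
have S_ge0 : 0 <= S := sqrtr_ge0 _.
have S'_ge1 : 1 <= S'.
  by rewrite -sqrtr1 ler_sqrt ?mulr_ge0 //; apply: mulr_ege1; rewrite ler1n.
have S'S : S' ^+ 2 = S ^+ 2 + d%:R.
  by rewrite !sqr_sqrtr ?mulr_ge0 // -natr1 mulrDr mulr1.
have d_ge1 : 1 <= d%:R :> R by rewrite ler1n.
have -> : q t.+1 = d%:R / lam ^+ 2 * (lam / (4 * S')).
  by rewrite /svm_eta -/S'; field; rewrite !gt_eqF // (lt_le_trans ltr01).
have K_ge0 : 0 <= d%:R / lam ^+ 2 :> R by rewrite divr_ge0 ?ler0n ?sqr_ge0.
clearbody S S'.
(* [2 S' (S' - S) = d + (S' - S)^2 >= 1] *)
have S'_incr : 1 <= 2 * S' * (S' - S) by nra.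
have S'_gt0 : 0 < 4 * S' by lra.
split; apply: ler_wpM2l => //; rewrite ler_pdivrMr //.
  by rewrite ler_peMr ?ltW //; lra.
by have := ler_wpM2l (ltW lam_gt0) S'_incr; have := lam_gt0; lra.
Qed.

Lemma pgd_regret_le T :
  \sum_(t < T) (F (beta t) - F bstar) <= d%:R / lam ^+ 2 * c T.
Proof.
have c_ge0 n : 0 <= c n by rewrite !mulr_ge0 ?sqrtr_ge0 ?ltW.
have := @sum_add_potential_le _ (fun t => F (beta t) - F bstar) (fun t => D t)
  (fun t => c t) (fun t => q t) _ _ pgd_descent pgd_dist_sq_le (c_ge0 0%N)
  (fun t => (svm_eta_step_le t).1) (fun t => (svm_eta_step_le t).2) T.
apply: le_trans; rewrite lerDl mulr_ge0 //.
by case/andP: (pgd_dist_sq_le T).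
Qed.

Lemma pgd_avg_gap_le T : (0 < T)%N ->
  F (pgd_avg x y lam proj T) - F bstar
    <= 4 * d%:R * Num.sqrt d%:R / (lam * Num.sqrt T%:R).
Proof.
move=> T_gt0; have := svmF_avg_le x y beta (ltW lam_gt0) T_gt0.
rewrite -/(pgd_avg x y lam proj T); set Fa := F _ => avg.
have := pgd_regret_le T; rewrite sumrB sumr_const card_ord -(mulr_natl (F bstar)).
rewrite sqrtrM ?ler0n //; set u := Num.sqrt T%:R.
have u_gt0 : 0 < u by rewrite sqrtr_gt0 ltr0n.
have -> : d%:R / lam ^+ 2 * (4 * lam * (Num.sqrt d%:R * u))
    = 4 * d%:R * Num.sqrt d%:R * u / lam by field; rewrite gt_eqF.
have Tu : T%:R = u ^+ 2 by rewrite sqr_sqrtr ?ler0n.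
rewrite Tu in avg * => regret.
have -> : 4 * d%:R * Num.sqrt d%:R / (lam * u)
    = (4 * d%:R * Num.sqrt d%:R * u / lam) / u ^+ 2 by field; rewrite !gt_eqF.
by rewrite ler_pdivlMr ?exprn_gt0 // mulrC; lra.
Qed.

End ProjectedGradientDescent.

End SVMBounds.

Theorem theorem6 (R : realType) (d N : nat) (x : 'I_N -> 'rV[R]_d)
  (y : 'I_N -> R) (lam : R) (proj : 'rV[R]_d -> 'rV[R]_d)
  (bstar : 'rV[R]_d) (T : nat) :
  (0 < N)%N ->
  (forall i j, `|x i 0 j| <= 1) ->
  (forall i, y i = 1 \/ y i = -1) ->
  0 < lam ->
  (forall b, svmF x y lam bstar <= svmF x y lam b) ->
  is_ball_projection (Num.sqrt d%:R / (2 * lam)) proj ->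
  (0 < T)%N ->
  svmF x y lam (pgd_avg x y lam proj T) - svmF x y lam bstar
    <= 4 * d%:R * Num.sqrt d%:R / (lam * Num.sqrt T%:R).
Proof.
move=> N_gt0 x_le1 y_pm1 lam_gt0 bstar_min projP T_gt0.
have [d0|d_gt0] := posnP d.
  subst d; rewrite (_ : pgd_avg x y lam proj T = bstar) ?subrr ?mulr0 ?mul0r //.
  by apply/rowP => -[].
have y_le1 i : `|y i| <= 1 by case: (y_pm1 i) => ->; rewrite ?normrN normr1.
exact: (pgd_avg_gap_le N_gt0 x_le1 y_le1 lam_gt0 projP bstar_min d_gt0 T_gt0).
Qed.
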